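(* Let $R$ be a unital ring and let $S$ be an inverse submonoid with zero of the multiplicative monoid of $R$. Suppose that (1) whenever $a,b\in S$ are orthogonal, $a+b\in S$; and (2) whenever $e\in S$ is an idempotent, $1-e\in S$. Then $S$ is a Boolean inverse monoid.
   Context: In an inverse semigroup with zero, $s,t$ are orthogonal if $s^{-1}t=0=st^{-1}$, and compatible if $s^{-1}t,st^{-1}$ are idempotents; the natural partial order is used. A Boolean inverse monoid is an inverse monoid with zero in which every pair of compatible elements has a join, multiplication distributes over these joins, and the idempotents form a Boolean algebra (a distributive lattice with bottom in which each principal order ideal is a unital Boolean algebra). *)

From mathcomp Require Import all_boot.
Set Implicit Arguments.
Unset Strict Implicit.
Unset Printing Implicit Defensive.

Section BIM.
Variables (T : Type) (mul : T -> T -> T) (one zero : T) (S : T -> Prop).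
Local Notation "x * y" := (mul x y).

Definition is_inv (s t : T) : Prop := S t /\ s * t * s = s /\ t * s * t = t.

Definition inverse_monoid_with_zero : Prop :=
  S one /\ S zero /\
  (forall x y, S x -> S y -> S (x * y)) /\
  (forall x y z, S x -> S y -> S z -> x * (y * z) = (x * y) * z) /\
  (forall x, S x -> one * x = x /\ x * one = x) /\
  (forall x, S x -> zero * x = zero /\ x * zero = zero) /\
  (forall s, S s -> exists t, is_inv s t /\ forall t', is_inv s t' -> t' = t).

Definition idem (e : T) : Prop := S e /\ e * e = e.

Definition nleq (s t : T) : Prop := S s /\ S t /\ exists e, idem e /\ s = t * e.

Definition ism_orthogonal (s t : T) : Prop :=
  exists s' t', [/\ is_inv s s', is_inv t t', s' * t = zero & s * t' = zero].

Definition ism_compatible (s t : T) : Prop :=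
  exists s' t', [/\ is_inv s s', is_inv t t', idem (s' * t) & idem (s * t')].

Definition is_join (s t u : T) : Prop :=
  [/\ S u, nleq s u, nleq t u & forall v, nleq s v -> nleq t v -> nleq u v].

Definition eleq (e f : T) : Prop := idem e /\ idem f /\ nleq e f.
Definition is_ejoin (e f u : T) : Prop :=
  [/\ eleq e u, eleq f u & forall v, eleq e v -> eleq f v -> eleq u v].
Definition is_emeet (e f m : T) : Prop :=
  [/\ eleq m e, eleq m f & forall v, eleq v e -> eleq v f -> eleq v m].

(* idempotents form a Boolean algebra: a distributive lattice with bottom in
   which each principal order ideal is a unital Boolean algebra *)
Definition idempotents_boolean : Prop :=
  [/\ (forall e f, idem e -> idem f -> exists u, is_ejoin e f u),
      (forall e f, idem e -> idem f -> exists m, is_emeet e f m),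
      (forall e f g j m1 m2 m3, idem e -> idem f -> idem g ->
          is_ejoin f g j -> is_emeet e j m1 -> is_emeet e f m2 -> is_emeet e g m3 ->
          is_ejoin m2 m3 m1) &
      exists b, [/\ idem b, (forall e, idem e -> eleq b e) &
        (forall e f, eleq f e ->
           exists g, [/\ eleq g e, is_emeet f g b & is_ejoin f g e])]].

Definition boolean_inverse_monoid : Prop :=
  [/\ inverse_monoid_with_zero,
      (forall s t, S s -> S t -> ism_compatible s t -> exists u, is_join s t u),
      (forall s t u a, S s -> S t -> S a -> ism_compatible s t -> is_join s t u ->
          is_join (a * s) (a * t) (a * u) /\ is_join (s * a) (t * a) (u * a)) &
      idempotents_boolean].

End BIM.

(* In an inverse semigroup the idempotents commute, so inside the ring R they
   behave like a Boolean algebra of commuting projections: e f is the meet,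
   1 - (1 - e)(1 - f) = e + (1 - e) f the join and 1 - e the complement.
   For compatible s, t the elements s and t (1 - s^-1 s) are orthogonal, so
   w := s + t (1 - s^-1 s) lies in S; w is above s and t, and any upper bound v
   satisfies w = v (s^-1 s + (1 - s^-1 s) t^-1 t), so w is the join.  The same
   formula, multiplied on either side by a, exhibits a s + a t (1 - ...) and
   s a + t a (1 - ...) as joins, which gives distributivity. *)

From mathcomp Require Import all_boot all_algebra.
From Stdlib Require Import ClassicalEpsilon.
Import GRing.Theory.
Set Implicit Arguments.
Unset Strict Implicit.
Unset Printing Implicit Defensive.

Definition inverse_semigroup (T : Type) (mul : T -> T -> T) (S : T -> Prop) :=
  [/\ associative mul, forall x y, S x -> S y -> S (mul x y) &
      forall s, S s ->
        exists t, is_inv mul S s t /\ forall t', is_inv mul S s t' -> t' = t].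

Section InverseSemigroup.
Variables (T : Type) (mul : T -> T -> T) (S : T -> Prop).
Hypothesis invS : inverse_semigroup mul S.

Local Notation "x * y" := (mul x y).
Local Notation is_inv := (is_inv mul S).
Local Notation idem := (idem mul S).
Local Notation nleq := (nleq mul S).
Local Notation eleq := (eleq mul S).

Lemma mulA : associative mul. Proof. by case: invS. Qed.

Lemma S_mul x y : S x -> S y -> S (x * y).
Proof. by case: invS => _ SM _; apply: SM. Qed.

Definition inv (s : T) : T := epsilon (inhabits s) (is_inv s).

Lemma invP s : S s -> is_inv s (inv s).
Proof.
move=> Ss; case: invS => _ _ /(_ s Ss) [t [st _]].
exact: epsilon_spec (ex_intro _ t st).
Qed.

Lemma inv_unique s t : S s -> is_inv s t -> t = inv s.
Proof.
move=> Ss st; case: invS => _ _ /(_ s Ss) [t0 [_ U]].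
by rewrite (U _ st) (U _ (invP Ss)).
Qed.

Lemma S_inv s : S s -> S (inv s). Proof. by case/invP. Qed.

Lemma mul_inv_mul s : S s -> s * inv s * s = s. Proof. by case/invP => _ []. Qed.

Lemma inv_mul_inv s : S s -> inv s * s * inv s = inv s. Proof. by case/invP => _ []. Qed.

Lemma invK s : S s -> inv (inv s) = s.
Proof.
move=> Ss; apply/esym/inv_unique; first exact: S_inv.
by split=> //; rewrite inv_mul_inv ?mul_inv_mul.
Qed.

Lemma inv_idem e : idem e -> inv e = e.
Proof. by move=> [Se ee]; apply/esym/inv_unique => //; rewrite /is_inv ee ee. Qed.

(* Write x for the inverse of e f: then f x e is an inverse of e f as well, so
   it equals x; this forces x to be idempotent, and e f = x^-1 = x. *)
Lemma idem_mul e f : idem e -> idem f -> idem (e * f).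
Proof.
move=> [Se ee] [Sf ff]; have Sef : S (e * f) by apply: S_mul.
have [Sx [efx xefx]] := invP Sef; set x := inv (e * f) in Sx efx xefx *.
rewrite !mulA in efx xefx.
have mule y : y * e * e = y * e by rewrite -mulA ee.
have mulf y : y * f * f = y * f by rewrite -mulA ff.
have xefx_l y : y * x * e * f * x = y * x by rewrite -{3}xefx !mulA.
have fxe : f * x * e = x.
  apply: inv_unique => //; split; first by apply: S_mul (S_mul Sf Sx) Se.
  by split; rewrite !mulA ?mulf ?mule // xefx_l.
have xx : x * x = x by rewrite -{1 2}fxe !mulA xefx_l fxe.
suff -> : e * f = inv x by rewrite inv_idem.
by apply: inv_unique => //; split => //; split; rewrite !mulA.
Qed.

(* f e is an inverse of the idempotent e f, whose unique inverse is e f itself. *)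
Lemma idem_commute e f : idem e -> idem f -> e * f = f * e.
Proof.
move=> Ie If; have Ief := idem_mul Ie If; have Ife := idem_mul If Ie.
have mule y : y * e * e = y * e by rewrite -mulA Ie.2.
have mulf y : y * f * f = y * f by rewrite -mulA If.2.
rewrite -(inv_idem Ief); apply/esym/inv_unique; first by case: Ief.
split; first by case: Ife.
split; rewrite !mulA ?mulf ?mule -(mulA (_ * _)).
- by rewrite Ief.2.
- by rewrite Ife.2.
Qed.

Lemma idem_inv_mul s : S s -> idem (inv s * s).
Proof. by move=> Ss; split; [apply: S_mul (S_inv Ss) Ss | rewrite mulA inv_mul_inv]. Qed.

Lemma idem_mul_inv s : S s -> idem (s * inv s).
Proof. by move=> Ss; split; [apply: S_mul Ss (S_inv Ss) | rewrite mulA mul_inv_mul]. Qed.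

Lemma invM s t : S s -> S t -> inv (s * t) = inv t * inv s.
Proof.
move=> Ss St; apply/esym/inv_unique; first exact: S_mul.
split; first by apply: S_mul; apply: S_inv.
have C := idem_commute (idem_mul_inv St) (idem_inv_mul Ss).
split.
- have -> : s * t * (inv t * inv s) * (s * t) = s * ((t * inv t) * (inv s * s)) * t.
    by rewrite !mulA.
  by rewrite C !mulA mul_inv_mul // -!mulA (mulA t) mul_inv_mul.
- have -> : inv t * inv s * (s * t) * (inv t * inv s)
            = inv t * ((inv s * s) * (t * inv t)) * inv s.
    by rewrite !mulA.
  by rewrite -C !mulA inv_mul_inv // -!mulA (mulA (inv s)) inv_mul_inv.
Qed.

Lemma nleqE x y : nleq x y -> x = y * (inv x * x).
Proof.
case=> Sx [Sy [e [Ie ->]]]; have Se := Ie.1.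
rewrite invM // (inv_idem Ie).
have -> : y * (e * inv y * (y * e)) = y * (e * (inv y * y)) * e by rewrite !mulA.
by rewrite (idem_commute Ie (idem_inv_mul Sy)) !mulA mul_inv_mul // -mulA Ie.2.
Qed.

Lemma nleq_anti x y : nleq x y -> nleq y x -> x = y.
Proof.
case=> Sx [Sy [e [Ie hx]]] [_ [_ [f [If hy]]]].
have yf : y * f = y by rewrite hy -mulA If.2.
by rewrite hx {2}hy hx -mulA (idem_commute Ie If) mulA yf.
Qed.

Lemma is_join_unique x y u v :
  is_join mul S x y u -> is_join mul S x y v -> u = v.
Proof.
by case=> Su xu yu Hu [Sv xv yv Hv]; apply: nleq_anti; [apply: Hu | apply: Hv].
Qed.

Lemma nleq_mul2l a x y : S a -> nleq x y -> nleq (a * x) (a * y).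
Proof.
move=> Sa [Sx [Sy [e [Ie Ex]]]]; split; [exact: S_mul | split; [exact: S_mul |]].
by exists e; split => //; rewrite Ex mulA.
Qed.

Lemma idem_conj a e :
  S a -> idem e -> idem (inv a * e * a) /\ e * a = a * (inv a * e * a).
Proof.
move=> Sa Ie; have Se := Ie.1; split.
  split; first by do 2?apply: S_mul => //; apply: S_inv.
  have -> : inv a * e * a * (inv a * e * a) = inv a * (e * (a * inv a)) * e * a.
    by rewrite !mulA.
  by rewrite (idem_commute Ie (idem_mul_inv Sa)) !mulA inv_mul_inv // -(mulA _ e e) Ie.2.
rewrite !mulA (idem_commute (idem_mul_inv Sa) Ie) -!mulA.
by rewrite (mulA a) mul_inv_mul.
Qed.

Lemma nleq_mul2r a x y : S a -> nleq x y -> nleq (x * a) (y * a).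
Proof.
move=> Sa [Sx [Sy [e [Ie Ex]]]]; split; [exact: S_mul | split; [exact: S_mul |]].
have [If Ef] := idem_conj Sa Ie.
by exists (inv a * e * a); split => //; rewrite Ex -mulA Ef mulA.
Qed.

Lemma compatible_idem s t :
  S s -> S t -> ism_compatible mul S s t -> idem (inv s * t) /\ idem (s * inv t).
Proof.
move=> Ss St [s' [t' [Hs Ht Ist Ist']]].
by rewrite (inv_unique Ss Hs) (inv_unique St Ht) in Ist Ist'.
Qed.

Lemma compatible_mul_inv s t :
  S s -> S t -> ism_compatible mul S s t -> t * inv s = s * inv t.
Proof.
move=> Ss St C; have [_ I] := compatible_idem Ss St C.
by rewrite -(inv_idem I) invM ?invK //; apply: S_inv.
Qed.

Lemma eleq_intro e f : idem e -> idem f -> e = f * e -> eleq e f.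
Proof.
move=> Ie If E; do 2!split => //.
by split; [case: Ie | split; [case: If | exists e]].
Qed.

Lemma eleqE e f : eleq e f -> f * e = e /\ e * f = e.
Proof.
case=> Ie [If [_ [_ [w [Iw Ew]]]]].
have fe : f * e = e by rewrite Ew mulA If.2.
by split => //; rewrite (idem_commute Ie If).
Qed.

Lemma is_emeet_mul e f : idem e -> idem f -> is_emeet mul S e f (e * f).
Proof.
move=> Ie If; have Ief := idem_mul Ie If.
split.
- by apply: eleq_intro => //; rewrite mulA Ie.2.
- by apply: eleq_intro => //; rewrite (idem_commute Ie If) mulA If.2.
- move=> v ve vf; have [ev _] := eleqE ve; have [fv _] := eleqE vf.
  by apply: eleq_intro => //; [case: ve | rewrite -mulA fv ev].
Qed.

Lemma is_ejoin_unique e f u v :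
  is_ejoin mul S e f u -> is_ejoin mul S e f v -> u = v.
Proof.
case=> eu fu Hu [ev fv Hv].
by apply: nleq_anti; [exact: (Hu _ ev fv).2.2 | exact: (Hv _ eu fu).2.2].
Qed.

Lemma is_emeet_unique e f u v :
  is_emeet mul S e f u -> is_emeet mul S e f v -> u = v.
Proof.
case=> ue uf Hu [ve vf Hv].
by apply: nleq_anti; [exact: (Hv _ ue uf).2.2 | exact: (Hu _ ve vf).2.2].
Qed.

End InverseSemigroup.

Local Open Scope ring_scope.

Lemma subr1_mul1B (R : pzRingType) (e f : R) : 1 - (1 - e) * (1 - f) = e + (1 - e) * f.
Proof. by rewrite mulrBr mulr1 opprB addrCA subKr addrC. Qed.

Section InverseSubmonoidOfRing.
Variables (R : pzRingType) (S : R -> Prop).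
Hypothesis imS : inverse_monoid_with_zero *%R 1 0 S.
Hypothesis S_add_orthogonal :
  forall a b, S a -> S b -> ism_orthogonal *%R 0 S a b -> S (a + b).
Hypothesis S_1B : forall e, idem *%R S e -> S (1 - e).

Local Notation inv := (inv *%R S).
Local Notation idem := (idem *%R S).
Local Notation nleq := (nleq *%R S).
Local Notation eleq := (eleq *%R S).
Local Notation is_join := (is_join *%R S).
Local Notation is_ejoin := (is_ejoin *%R S).
Local Notation is_emeet := (is_emeet *%R S).
Local Notation compatible := (ism_compatible *%R S).

Lemma invS : inverse_semigroup *%R S.
Proof. by case: imS => _ [_ [SM [_ [_ [_ Sinv]]]]]; split => //; apply: mulrA. Qed.

Lemma idem_1B e : idem e -> idem (1 - e).
Proof.
move=> Ie; split; first exact: S_1B.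
by rewrite mulrBr mulr1 mulrBl mul1r Ie.2 subrr subr0.
Qed.

Lemma idem0 : idem 0.
Proof. by case: imS => _ [S0 _]; split; rewrite ?mulr0. Qed.

Lemma eleq0 e : idem e -> eleq 0 e.
Proof. by move=> Ie; apply: eleq_intro idem0 Ie _; rewrite mulr0. Qed.

Lemma is_join_add x y w : S x -> S y -> nleq x w -> nleq y w ->
  w = x + y * (1 - inv x * x) -> is_join x y w.
Proof.
move=> Sx Sy xw yw Ew; have [_ [Sw _]] := xw; split => // v xv yv.
have [_ [Sv _]] := xv; split => //; split => //.
have Ix := idem_inv_mul invS Sx; have Iy := idem_inv_mul invS Sy.
exists (1 - (1 - inv x * x) * (1 - inv y * y)); split.
  by apply/idem_1B/(idem_mul invS); apply: idem_1B.
rewrite subr1_mul1B Ew {1}(nleqE invS xv) {1}(nleqE invS yv) -mulrA -mulrDr.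
by rewrite (idem_commute invS (idem_1B Ix) Iy).
Qed.

Lemma orthogonal_mul_1B s t : S s -> S t -> compatible s t ->
  ism_orthogonal *%R 0 S s (t * (1 - inv s * s)).
Proof.
move=> Ss St C; have [Ist _] := compatible_idem invS Ss St C.
have Is := idem_inv_mul invS Ss.
have St' : S (t * (1 - inv s * s)) := S_mul invS St (S_1B Is).
exists (inv s), (inv (t * (1 - inv s * s))).
split; [exact: (invP invS Ss) | exact: (invP invS St') | |].
- rewrite mulrA mulrBr mulr1 (idem_commute invS Ist Is) !mulrA.
  by rewrite (inv_mul_inv invS Ss) subrr.
- rewrite (invM invS St (S_1B Is)) (inv_idem invS (idem_1B Is)) mulrA mulrBr mulr1.
  by rewrite mulrA (mul_inv_mul invS Ss) subrr mul0r.
Qed.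

Lemma join_compatible s t : S s -> S t -> compatible s t ->
  is_join s t (s + t * (1 - inv s * s)).
Proof.
move=> Ss St C; have [_ Its] := compatible_idem invS Ss St C.
have Is := idem_inv_mul invS Ss; have It := idem_inv_mul invS St.
have Sw := S_add_orthogonal Ss (S_mul invS St (S_1B Is)) (orthogonal_mul_1B Ss St C).
apply: is_join_add => //; (split; [done | split; [done |]]).
- exists (inv s * s); split => //; apply/esym.
  rewrite mulrDl -mulrA mulrBl mul1r Is.2 subrr mulr0 addr0 mulrA.
  exact: (mul_inv_mul invS Ss).
- exists (inv t * t); split => //; apply/esym.
  have tIt : t * (inv t * t) = t by rewrite mulrA (mul_inv_mul invS St).
  have tIsIt : t * (inv s * s * (inv t * t)) = s * (inv t * t).
    rewrite !mulrA (compatible_mul_inv invS Ss St C) -(mulrA (s * inv t) s) Its.2.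
    by rewrite -mulrA.
  by rewrite mulrDl -mulrA mulrBl mul1r mulrBr tIt tIsIt addrC subrK.
Qed.

Section JoinDistributivity.
Variables (s t u a : R).
Hypotheses (Ss : S s) (St : S t) (Sa : S a) (Cst : compatible s t) (Ju : is_join s t u).

Let uE : u = s + t * (1 - inv s * s) :=
  is_join_unique invS Ju (join_compatible Ss St Cst).

Lemma join_mull : is_join (a * s) (a * t) (a * u).
Proof.
have [Su su tu _] := Ju; have Ist : idem (t * inv s).
  by rewrite (compatible_mul_inv invS Ss St Cst); case: (compatible_idem invS Ss St Cst).
apply: (is_join_add (S_mul invS Sa Ss) (S_mul invS Sa St)
  (nleq_mul2l invS Sa su) (nleq_mul2l invS Sa tu)).
rewrite uE mulrDr mulrA !mulrBr !mulr1 (invM invS Sa Ss).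
have -> : a * t * (inv s * inv a * (a * s)) = a * ((t * inv s) * (inv a * a)) * s.
  by rewrite !mulrA.
by rewrite (idem_commute invS Ist (idem_inv_mul invS Sa)) !mulrA (mul_inv_mul invS Sa).
Qed.

Lemma join_mulr : is_join (s * a) (t * a) (u * a).
Proof.
have [Su su tu _] := Ju.
apply: (is_join_add (S_mul invS Ss Sa) (S_mul invS St Sa)
  (nleq_mul2r invS Sa su) (nleq_mul2r invS Sa tu)).
rewrite uE mulrDl -mulrA mulrBl mul1r !mulrBr mulr1 (invM invS Ss Sa).
have -> : t * a * (inv a * inv s * (s * a)) = t * ((a * inv a) * (inv s * s)) * a.
  by rewrite !mulrA.
rewrite (idem_commute invS (idem_mul_inv invS Sa) (idem_inv_mul invS Ss)) !mulrA.
by rewrite -!mulrA (mulrA a (inv a)) (mul_inv_mul invS Sa).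
Qed.

End JoinDistributivity.

Lemma is_ejoin_1B e f : idem e -> idem f -> is_ejoin e f (1 - (1 - e) * (1 - f)).
Proof.
move=> Ie If; have I1e := idem_1B Ie; have I1f := idem_1B If.
have Iu : idem (1 - (1 - e) * (1 - f)) by apply/idem_1B/(idem_mul invS).
split.
- apply: eleq_intro => //.
  rewrite mulrBl mul1r -mulrA (idem_commute invS I1f Ie) mulrA mulrBl mul1r Ie.2.
  by rewrite subrr mul0r subr0.
- apply: eleq_intro => //.
  by rewrite mulrBl mul1r -mulrA [(1 - f) * f]mulrBl mul1r If.2 subrr mulr0 subr0.
- move=> v ev fv; have [ve _] := eleqE invS ev; have [vf _] := eleqE invS fv.
  apply: eleq_intro => //; first by case: ev => _ [].
  by rewrite subr1_mul1B mulrDr ve mulrA (idem_commute invS ev.2.1 I1e) -mulrA vf.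
Qed.

Lemma idem_meet_join_distr e f g : idem e -> idem f -> idem g ->
  e * (1 - (1 - f) * (1 - g)) = 1 - (1 - e * f) * (1 - e * g).
Proof.
move=> Ie If Ig; rewrite !subr1_mul1B mulrDr mulrA; congr (_ + _).
rewrite mulrBr mulr1 mulrBl [(1 - e * f) * _]mulrBl mul1r; congr (_ - _).
by rewrite mulrA -(mulrA e f e) (idem_commute invS If Ie) mulrA Ie.2.
Qed.

Lemma idem_distributive e f g j m1 m2 m3 : idem e -> idem f -> idem g ->
  is_ejoin f g j -> is_emeet e j m1 -> is_emeet e f m2 -> is_emeet e g m3 ->
  is_ejoin m2 m3 m1.
Proof.
move=> Ie If Ig Jj M1 M2 M3.
have Ij := idem_1B (idem_mul invS (idem_1B If) (idem_1B Ig)).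
rewrite -(is_ejoin_unique invS (is_ejoin_1B If Ig) Jj) in M1.
rewrite -(is_emeet_unique invS (is_emeet_mul invS Ie Ij) M1).
rewrite -(is_emeet_unique invS (is_emeet_mul invS Ie If) M2).
rewrite -(is_emeet_unique invS (is_emeet_mul invS Ie Ig) M3).
rewrite idem_meet_join_distr //.
exact: (is_ejoin_1B (idem_mul invS Ie If) (idem_mul invS Ie Ig)).
Qed.

Lemma idem_relative_complement e f : eleq f e ->
  exists g, [/\ eleq g e, is_emeet f g 0 & is_ejoin f g e].
Proof.
move=> fe; have If := fe.1; have Ie := fe.2.1; have [ef _] := eleqE invS fe.
have Ig : idem (e * (1 - f)) := idem_mul invS Ie (idem_1B If).
have ge : eleq (e * (1 - f)) e by apply: eleq_intro => //; rewrite mulrA Ie.2.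
exists (e * (1 - f)); split => //.
- split; [exact: eleq0 | exact: eleq0 |].
  move=> v vf vg; have [fv _] := eleqE invS vf; have [gv _] := eleqE invS vg.
  suff -> : v = 0 by exact: eleq0 idem0.
  by rewrite -gv -fv mulrA -(mulrA e) mulrBl mul1r If.2 subrr mulr0 mul0r.
- split => // v fv gv; have [vf _] := eleqE invS fv; have [vg _] := eleqE invS gv.
  have Efg : e = f + e * (1 - f) by rewrite mulrBr mulr1 ef addrC subrK.
  by apply: eleq_intro => //; [case: fv => _ [] | rewrite {2}Efg mulrDr vf vg -Efg].
Qed.

Lemma idempotents_booleanS : idempotents_boolean *%R S.
Proof.
split; [by move=> e f Ie If; eexists; apply: is_ejoin_1B
       | by move=> e f Ie If; eexists; exact: (is_emeet_mul invS Ie If)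
       | exact: idem_distributive |].
by exists 0; split; [exact: idem0 | exact: eleq0 | exact: idem_relative_complement].
Qed.

End InverseSubmonoidOfRing.

Theorem lemma3p1 (R : pzRingType) (S : R -> Prop) :
  inverse_monoid_with_zero (@GRing.mul R) 1 0 S ->
  (forall a b, S a -> S b -> ism_orthogonal (@GRing.mul R) 0 S a b -> S (a + b)) ->
  (forall e, idem (@GRing.mul R) S e -> S (1 - e)) ->
  boolean_inverse_monoid (@GRing.mul R) 1 0 S.
Proof.
move=> imS S_add S_1B; split => //.
- by move=> s t Ss St C; eexists; exact: join_compatible.
- by move=> s t u a Ss St Sa C J; split; [exact: join_mull | exact: join_mulr].
- exact: idempotents_booleanS.
Qed.
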